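(* Let $A=\mathrm{diag}(2,3,5)$ and $B=(1,2,1)$, and let $\mathrm{NT}=\{(x_1,x_2,x_3)\in\mathbb{R}^3 : BA^k(x_1,x_2,x_3)^T\ge 0 \text{ for all integers } k\ge 0\}=\{\vec{x}: 2^kx_1+2\cdot 3^kx_2+5^kx_3\ge 0\ \forall k\ge 0\}$, the non-termination set of the loop ''while $(x_1+2x_2+x_3\ge 0)$ $\{(x_1,x_2,x_3):=(2x_1,3x_2,5x_3)\}$''. Then $\mathrm{NT}$ is not a semi-algebraic set.
   Context: A semi-algebraic subset of $\mathbb{R}^n$ is a set of the form $\bigcup_{i=1}^s\bigcap_{j=1}^{r_i}\{\vec{x}\in\mathbb{R}^n: f_{i,j}(\vec{x})\,\triangleleft_{i,j}\,0\}$ with finitely many polynomials $f_{i,j}\in\mathbb{R}[x_1,\dots,x_n]$ and $\triangleleft_{i,j}\in\{<,=\}$. *)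

From Stdlib Require Import Reals List.
Open Scope R_scope.

Inductive poly3 : Type :=
| PConst : R -> poly3
| PX1 : poly3
| PX2 : poly3
| PX3 : poly3
| PAdd : poly3 -> poly3 -> poly3
| PMul : poly3 -> poly3 -> poly3.

Fixpoint peval (p : poly3) (x : R * R * R) : R :=
  match p with
  | PConst c => c
  | PX1 => fst (fst x)
  | PX2 => snd (fst x)
  | PX3 => snd x
  | PAdd p q => peval p x + peval q x
  | PMul p q => peval p x * peval q x
  end.

Inductive sign_rel : Type := RLt | REq.

Definition atom_holds (a : poly3 * sign_rel) (x : R * R * R) : Prop :=
  match snd a with
  | RLt => peval (fst a) x < 0
  | REq => peval (fst a) x = 0
  end.

Definition semialgebraic3 (S : R * R * R -> Prop) : Prop :=
  exists D : list (list (poly3 * sign_rel)),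
    forall x, S x <-> Exists (fun C => Forall (fun a => atom_holds a x) C) D.

Definition NT (x : R * R * R) : Prop :=
  let '(x1, x2, x3) := x in
  forall k : nat, 2 ^ k * x1 + 2 * 3 ^ k * x2 + 5 ^ k * x3 >= 0.

From Stdlib Require Import Reals List.
From Stdlib Require Import Lra Lia Classical Arith.
Open Scope R_scope.

(* Restrict attention to the plane x2 = -1/2 and write
   pt c s = (c, -1/2, s).  There NT is the region above the upper envelope
   of the lines  L_k : s = line k c = (3^k - 2^k c) / 5^k,  and for every k
   infinitely many points c_{k,n} (accumulating, strictly decreasing in n)
   have their envelope point on L_k.  Suppose NT is described by finitely
   many clauses.  A clause holding at such a boundary point cannot hold on a
   whole vertical neighbourhood (points just below are outside NT), so it
   contains an equation f = 0 with f vanishing at the point but not on the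
   vertical line through it.  Pigeonhole over n plus "a univariate
   polynomial with infinitely many roots is zero" shows that, for every k,
   some f vanishes on all of L_k; pigeonhole over k gives one f vanishing on
   infinitely many L_k.  The vertical line through a fixed c0 meets the L_k
   in infinitely many distinct points, so f vanishes on that vertical line,
   which was excluded. *)

Fixpoint evalL (l : list R) (x : R) : R :=
  match l with nil => 0 | a :: l' => a + x * evalL l' x end.

Fixpoint addL (l m : list R) : list R :=
  match l, m with
  | nil, _ => m
  | _, nil => l
  | a :: l', b :: m' => (a + b) :: addL l' m'
  end.

Lemma evalL_add l m x : evalL (addL l m) x = evalL l x + evalL m x.
Proof.
  revert m; induction l as [|a l IH]; intros [|b m]; simpl; try ring.
  rewrite IH. ring.
Qed.

Definition scalL (a : R) (l : list R) : list R := map (fun b => a * b) l.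

Lemma evalL_scal a l x : evalL (scalL a l) x = a * evalL l x.
Proof. induction l as [|b l IH]; simpl; [|rewrite IH]; ring. Qed.

Fixpoint mulL (l m : list R) : list R :=
  match l with nil => nil | a :: l' => addL (scalL a m) (0 :: mulL l' m) end.

Lemma evalL_mul l m x : evalL (mulL l m) x = evalL l x * evalL m x.
Proof.
  induction l as [|a l IH]; simpl; [ring|].
  rewrite evalL_add, evalL_scal; simpl; rewrite IH; ring.
Qed.

Definition PolyF (g : R -> R) : Prop := exists l, forall x, g x = evalL l x.

Lemma PolyF_const c : PolyF (fun _ => c).
Proof. exists (c :: nil); intro; simpl; ring. Qed.

Lemma PolyF_id : PolyF (fun x => x).
Proof. exists (0 :: 1 :: nil); intro; simpl; ring. Qed.

Lemma PolyF_add g h : PolyF g -> PolyF h -> PolyF (fun x => g x + h x).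
Proof.
  intros [l Hl] [m Hm]; exists (addL l m); intro x.
  rewrite evalL_add, Hl, Hm; reflexivity.
Qed.

Lemma PolyF_mul g h : PolyF g -> PolyF h -> PolyF (fun x => g x * h x).
Proof.
  intros [l Hl] [m Hm]; exists (mulL l m); intro x.
  rewrite evalL_mul, Hl, Hm; reflexivity.
Qed.

Lemma evalL_continuous l : continuity (evalL l).
Proof.
  induction l as [|a l IH]; simpl.
  - apply continuity_const; intros u v; reflexivity.
  - change (continuity (fct_cte a + id * evalL l)%F).
    apply continuity_plus; [apply continuity_const; intros u v; reflexivity|].
    apply continuity_mult; [apply derivable_continuous, derivable_id | exact IH].
Qed.

Lemma PolyF_neg_nbhd g x : PolyF g -> g x < 0 ->
  exists d, d > 0 /\ forall y, Rabs (y - x) < d -> g y < 0.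
Proof.
  intros [l Hl] Hgx. rewrite Hl in Hgx.
  destruct (evalL_continuous l x (- evalL l x)) as [d [Hd Hnear]]; [lra|].
  exists d; split; [exact Hd|]. intros y Hy. rewrite Hl.
  destruct (Req_dec x y) as [<-|Hne]; [exact Hgx|].
  assert (Hdist := Hnear y (conj (conj I Hne) Hy)).
  simpl in Hdist; unfold Rdist in Hdist. apply Rabs_def2 in Hdist. lra.
Qed.

Lemma factor_theorem l r : exists q, (length q <= pred (length l))%nat /\
  forall x, evalL l x - evalL l r = (x - r) * evalL q x.
Proof.
  induction l as [|a [|b l'] IH].
  - exists nil; simpl; split; [lia | intros; ring].
  - exists nil; simpl; split; [lia | intros; ring].
  - destruct IH as [q [Hlen Hq]].
    exists (evalL (b :: l') r :: q); split; [simpl in *; lia|].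
    intro x. assert (Hx := Hq x). simpl in Hx |- *.
    replace (x * (b + x * evalL l' x)) with
      (x * ((b + x * evalL l' x) - (b + r * evalL l' r)) + x * (b + r * evalL l' r))
      by ring.
    rewrite Hx; ring.
Qed.

Lemma evalL_zero_of_many_roots l :
  (forall rs : list R, exists x, ~ In x rs /\ evalL l x = 0) ->
  forall x, evalL l x = 0.
Proof.
  remember (length l) as n eqn:Hn. assert (Hlen : (length l <= n)%nat) by lia.
  clear Hn. revert l Hlen.
  induction n as [|n IH]; intros l Hlen Hroots x.
  - destruct l; simpl in *; [reflexivity | lia].
  - destruct (Hroots nil) as [r [_ Hr]].
    destruct (factor_theorem l r) as [q [Hq Hfac]].
    assert (Hq0 : forall y, evalL q y = 0).
    { apply IH; [destruct l; simpl in *; lia|].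
      intros rs. destruct (Hroots (r :: rs)) as [y [Hy Hy0]].
      exists y; split; [intro; apply Hy; right; assumption|].
      assert (y <> r) by (intro; apply Hy; left; auto).
      specialize (Hfac y). rewrite Hy0, Hr in Hfac.
      destruct (Rmult_integral (y - r) (evalL q y)); lra. }
    specialize (Hfac x). rewrite Hq0, Hr in Hfac. lra.
Qed.

Definition infinitely_often (P : nat -> Prop) : Prop :=
  forall N, exists n, (N <= n)%nat /\ P n.

Definition eventually_decreasing (v : nat -> R) : Prop :=
  exists K, forall k, (K <= k)%nat -> v (S k) < v k.

Lemma eventually_decreasing_strict v K :
  (forall k, (K <= k)%nat -> v (S k) < v k) ->
  forall n m, (K <= n)%nat -> (n < m)%nat -> v m < v n.
Proof.
  intros Hstep n m Hn Hm. induction m as [|m IH]; [lia|].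
  destruct (Nat.eq_dec n m) as [->|Hne]; [apply Hstep; assumption|].
  assert (v m < v n) by (apply IH; lia).
  assert (v (S m) < v m) by (apply Hstep; lia). lra.
Qed.

Lemma eventually_decreasing_avoids v : eventually_decreasing v ->
  forall l, exists N, forall n, (N <= n)%nat -> ~ In (v n) l.
Proof.
  intros [K HK] l. pose proof (eventually_decreasing_strict v K HK) as Hstrict.
  induction l as [|a l [N HN]]; [exists 0%nat; intros n _ []|].
  destruct (classic (exists n0, (K <= n0)%nat /\ v n0 = a)) as [[n0 [Hn0 Ha]]|Hnot].
  - exists (Nat.max N (S n0)). intros n Hn [Heq|Hin].
    + assert (v n < v n0) by (apply Hstrict; lia). lra.
    + apply (HN n); [lia | assumption].
  - exists (Nat.max N K). intros n Hn [Heq|Hin].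
    + apply Hnot; exists n; split; [lia | symmetry; exact Heq].
    + apply (HN n); [lia | assumption].
Qed.

Lemma PolyF_zero_along h v : PolyF h -> eventually_decreasing v ->
  infinitely_often (fun n => h (v n) = 0) -> forall x, h x = 0.
Proof.
  intros [l Hl] Hdec Hinf x. rewrite Hl.
  apply evalL_zero_of_many_roots. intros rs.
  destruct (eventually_decreasing_avoids v Hdec rs) as [N HN].
  destruct (Hinf N) as [n [Hn Hzero]].
  exists (v n); split; [apply HN; assumption | rewrite <- Hl; assumption].
Qed.

Lemma pigeonhole {A} (l : list A) (Q : A -> nat -> Prop) :
  infinitely_often (fun n => exists a, In a l /\ Q a n) ->
  exists a, In a l /\ infinitely_often (Q a).
Proof.
  induction l as [|a l IH]; intros Hinf.
  - destruct (Hinf 0%nat) as [n [_ [b [[] _]]]].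
  - destruct (classic (infinitely_often (Q a))) as [Ha|Ha];
      [exists a; split; [left; reflexivity | exact Ha]|].
    apply not_all_ex_not in Ha. destruct Ha as [N0 HN0].
    destruct IH as [b [Hb HQ]]; [|exists b; split; [right|]; assumption].
    intros N. destruct (Hinf (Nat.max N N0)) as [n [Hn [b [[<-|Hb] HQ]]]].
    + exfalso; apply HN0; exists n; split; [lia | assumption].
    + exists n; split; [lia|]; exists b; split; assumption.
Qed.

Lemma pigeonhole_always {A} (l : list A) (Q : A -> nat -> Prop) :
  (forall n, exists a, In a l /\ Q a n) -> exists a, In a l /\ infinitely_often (Q a).
Proof.
  intros Hall. apply pigeonhole. intros N. exists N; split; [lia | apply Hall].
Qed.

Definition poly_curve (gamma : R -> R * R * R) : Prop :=
  PolyF (fun t => fst (fst (gamma t))) /\ PolyF (fun t => snd (fst (gamma t))) /\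
  PolyF (fun t => snd (gamma t)).

Lemma peval_poly_curve f gamma : poly_curve gamma -> PolyF (fun t => peval f (gamma t)).
Proof.
  intros [H1 [H2 H3]]. induction f; simpl;
    auto using PolyF_const, PolyF_add, PolyF_mul.
Qed.

Lemma clause_rigid_or_open gamma t0 (C : list (poly3 * sign_rel)) :
  poly_curve gamma -> Forall (fun a => atom_holds a (gamma t0)) C ->
  (exists p, In (p, REq) C /\ peval p (gamma t0) = 0 /\ exists t, peval p (gamma t) <> 0) \/
  (exists d, d > 0 /\ forall t, Rabs (t - t0) < d -> Forall (fun a => atom_holds a (gamma t)) C).
Proof.
  intros Hcurve. induction C as [|[p r] C IH]; intros Hholds.
  - right; exists 1; split; [lra | constructor].
  - inversion Hholds as [|a' C' Hatom HC]; subst.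
    destruct (IH HC) as [[q [Hq Hrest]]|[d [Hd Hnear]]];
      [left; exists q; split; [right|]; assumption|].
    unfold atom_holds in Hatom; simpl in Hatom. destruct r.
    + destruct (PolyF_neg_nbhd (fun t => peval p (gamma t)) t0
                  (peval_poly_curve p gamma Hcurve) Hatom) as [d' [Hd' Hneg]].
      right; exists (Rmin d d'); split; [apply Rmin_glb_lt; lra|].
      intros t Ht. pose proof (Rmin_l d d'); pose proof (Rmin_r d d').
      constructor; [apply Hneg | apply Hnear]; lra.
    + destruct (classic (forall t, peval p (gamma t) = 0)) as [Hall|Hsome].
      * right; exists d; split; [exact Hd|]. intros t Ht.
        constructor; [apply Hall | apply Hnear; exact Ht].
      * left; exists p; split; [left; reflexivity|]. split; [exact Hatom|].
        apply not_all_ex_not; exact Hsome.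
Qed.

Definition pt (c s : R) : R * R * R := (c, -1/2, s).

(* The k-th constraint at pt c s reads  line k c <= s. *)
Definition line (k : nat) (c : R) : R := (3 ^ k - 2 ^ k * c) / 5 ^ k.

Lemma NT_pt c s : NT (pt c s) <-> forall k, line k c <= s.
Proof.
  unfold NT, pt, line.
  split; intros H k; specialize (H k); assert (0 < 5 ^ k) by (apply pow_lt; lra).
  - apply Rmult_le_reg_l with (5 ^ k); [assumption|].
    replace (5 ^ k * ((3 ^ k - 2 ^ k * c) / 5 ^ k)) with (3 ^ k - 2 ^ k * c)
      by (field; lra). lra.
  - apply Rmult_le_compat_l with (r := 5 ^ k) in H; [|lra].
    replace (5 ^ k * ((3 ^ k - 2 ^ k * c) / 5 ^ k)) with (3 ^ k - 2 ^ k * c)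
      in H by (field; lra). lra.
Qed.

Lemma poly_curve_vertical c : poly_curve (pt c).
Proof.
  repeat split; simpl; [apply PolyF_const | apply PolyF_const | apply PolyF_id].
Qed.

Lemma poly_curve_line k : poly_curve (fun c => pt c (line k c)).
Proof.
  repeat split; simpl; [apply PolyF_id | apply PolyF_const |].
  exists ((3 ^ k / 5 ^ k) :: (- (2 ^ k / 5 ^ k)) :: nil); intro x; simpl.
    unfold line; field; apply pow_nonzero; lra.
Qed.

Lemma pow_dominated a p q m : 0 <= a -> 0 <= p <= q -> p ^ 2 <= a * q ^ 2 ->
  p ^ (m + 2) <= a * q ^ (m + 2).
Proof.
  intros Ha Hpq Hbase. induction m as [|m IH]; [exact Hbase|].
  replace (S m + 2)%nat with (S (m + 2)) by lia. simpl.
  assert (0 <= p ^ (m + 2)) by (apply pow_le; lra).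
  assert (0 <= a * q ^ (m + 2)) by (apply Rmult_le_pos; [|apply pow_le]; lra).
  nra.
Qed.

Lemma envelope_ineq_after t m : 1/2 < t <= 11/20 -> 3 ^ m <= t * 2 ^ m + (1 - t) * 5 ^ m.
Proof.
  intros Ht. assert (0 < 2 ^ m) by (apply pow_lt; lra).
  destruct m as [|[|m]]; [simpl; lra | simpl; lra|].
  replace (S (S m)) with (m + 2)%nat by lia.
  assert (H35 : 3 ^ (m + 2) <= 9/20 * 5 ^ (m + 2))
    by (apply pow_dominated; simpl; lra).
  assert (0 < 5 ^ (m + 2)) by (apply pow_lt; lra).
  assert (0 <= t * 2 ^ (m + 2)) by (apply Rmult_le_pos; [|apply pow_le]; lra).
  assert (9/20 * 5 ^ (m + 2) <= (1 - t) * 5 ^ (m + 2)) by (apply Rmult_le_compat_r; lra).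
  lra.
Qed.

Lemma envelope_ineq_before t m : 1/2 < t <= 11/20 ->
  2 ^ m * 5 ^ m <= t * 3 ^ m * 5 ^ m + (1 - t) * 2 ^ m * 3 ^ m.
Proof.
  intros Ht. assert (0 < 2 ^ m) by (apply pow_lt; lra).
  assert (0 < 3 ^ m) by (apply pow_lt; lra). assert (0 < 5 ^ m) by (apply pow_lt; lra).
  assert (0 <= (1 - t) * 2 ^ m * 3 ^ m) by (apply Rmult_le_pos; [apply Rmult_le_pos|]; lra).
  destruct m as [|[|m]]; [simpl in *; lra | simpl in *; lra|].
  replace (S (S m)) with (m + 2)%nat in * by lia.
  assert (H23 : 2 ^ (m + 2) <= 4/9 * 3 ^ (m + 2))
    by (apply pow_dominated; simpl; lra).
  assert (2 ^ (m + 2) <= t * 3 ^ (m + 2)) by nra.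
  assert (2 ^ (m + 2) * 5 ^ (m + 2) <= t * 3 ^ (m + 2) * 5 ^ (m + 2))
    by (apply Rmult_le_compat_r; lra).
  lra.
Qed.

Lemma envelope_attained t k : 1/2 < t <= 11/20 ->
  forall j, line j (t * 3 ^ k / 2 ^ k) <= line k (t * 3 ^ k / 2 ^ k).
Proof.
  intros Ht j. unfold line.
  pose proof (pow_lt 2 k ltac:(lra)); pose proof (pow_lt 3 k ltac:(lra)); pose proof (pow_lt 5 k ltac:(lra)).
  destruct (le_lt_dec k j) as [Hkj|Hjk].
  - replace j with (k + (j - k))%nat by lia. set (m := (j - k)%nat).
    pose proof (pow_lt 5 m ltac:(lra)); pose proof (envelope_ineq_after t m Ht). rewrite !pow_add.
    apply Rmult_le_reg_l with (5 ^ k * 5 ^ m); [apply Rmult_lt_0_compat; assumption|].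
    replace (5 ^ k * 5 ^ m * ((3 ^ k * 3 ^ m - 2 ^ k * 2 ^ m * (t * 3 ^ k / 2 ^ k)) /
      (5 ^ k * 5 ^ m))) with (3 ^ k * (3 ^ m - t * 2 ^ m)) by (field; lra).
    replace (5 ^ k * 5 ^ m * ((3 ^ k - 2 ^ k * (t * 3 ^ k / 2 ^ k)) / 5 ^ k))
      with (3 ^ k * ((1 - t) * 5 ^ m)) by (field; lra).
    apply Rmult_le_compat_l; lra.
  - replace k with (j + (k - j))%nat by lia. set (m := (k - j)%nat).
    pose proof (pow_lt 2 j ltac:(lra)); pose proof (pow_lt 3 j ltac:(lra)); pose proof (pow_lt 5 j ltac:(lra)).
    pose proof (pow_lt 2 m ltac:(lra)); pose proof (pow_lt 5 m ltac:(lra)); pose proof (envelope_ineq_before t m Ht).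
    rewrite !pow_add.
    apply Rmult_le_reg_l with (5 ^ j * 5 ^ m * 2 ^ m);
      [repeat apply Rmult_lt_0_compat; assumption|].
    replace (5 ^ j * 5 ^ m * 2 ^ m * ((3 ^ j - 2 ^ j * (t * (3 ^ j * 3 ^ m) /
      (2 ^ j * 2 ^ m))) / 5 ^ j)) with (3 ^ j * (2 ^ m * 5 ^ m - t * 3 ^ m * 5 ^ m))
      by (field; lra).
    replace (5 ^ j * 5 ^ m * 2 ^ m * ((3 ^ j * 3 ^ m - 2 ^ j * 2 ^ m * (t * (3 ^ j * 3 ^ m) /
      (2 ^ j * 2 ^ m))) / (5 ^ j * 5 ^ m))) with (3 ^ j * ((1 - t) * 2 ^ m * 3 ^ m))
      by (field; lra).
    apply Rmult_le_compat_l; lra.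
Qed.

Definition theta (n : nat) : R := 1/2 + 1 / (20 * (INR n + 1)).

Lemma theta_bounds n : 1/2 < theta n <= 11/20.
Proof.
  unfold theta. pose proof (pos_INR n).
  assert (0 < 1 / (20 * (INR n + 1))) by (apply Rdiv_lt_0_compat; lra).
  assert (1 / (20 * (INR n + 1)) <= 1/20)
    by (unfold Rdiv; rewrite !Rmult_1_l; apply Rinv_le_contravar; lra).
  lra.
Qed.

Definition corner (k n : nat) : R := theta n * 3 ^ k / 2 ^ k.

Lemma corner_decreasing k : eventually_decreasing (corner k).
Proof.
  exists 0%nat; intros n _. unfold corner, theta. rewrite S_INR.
  assert (0 < 3 ^ k / 2 ^ k) by (apply Rdiv_lt_0_compat; apply pow_lt; lra).
  assert (1 / (20 * (INR n + 1 + 1)) < 1 / (20 * (INR n + 1))).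
  { pose proof (pos_INR n). unfold Rdiv; rewrite !Rmult_1_l.
    apply Rinv_lt_contravar; nra. }
  unfold Rdiv in *. rewrite !(Rmult_assoc (_ + _)). apply Rmult_lt_compat_r; lra.
Qed.

Lemma two_pow_growth k : 2 ^ k * (2 + INR k) <= 2 * 3 ^ k.
Proof.
  induction k as [|k IH]; [simpl; lra|].
  rewrite S_INR; simpl. pose proof (pow_lt 2 k). pose proof (pos_INR k). nra.
Qed.

Lemma line_decreasing c : eventually_decreasing (fun k => line k c).
Proof.
  destruct (INR_unbounded (3 * c)) as [K HK]. exists K; intros k Hk.
  apply le_INR in Hk. pose proof (two_pow_growth k).
  assert (0 < 2 ^ k) by (apply pow_lt; lra). assert (0 < 5 ^ k) by (apply pow_lt; lra).
  assert (Hdiff : line k c - line (S k) c = (2 * 3 ^ k - 3 * 2 ^ k * c) / (5 * 5 ^ k))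
    by (unfold line; simpl; field; lra).
  assert (0 < (2 * 3 ^ k - 3 * 2 ^ k * c) / (5 * 5 ^ k))
    by (apply Rdiv_lt_0_compat; nra).
  lra.
Qed.

Definition polys_of (D : list (list (poly3 * sign_rel))) : list poly3 := flat_map (map fst) D.

Section FiniteDescription.

Variable D : list (list (poly3 * sign_rel)).
Hypothesis HD : forall x, NT x <-> Exists (fun C => Forall (fun a => atom_holds a x) C) D.

Lemma boundary_witness k c : (forall j, line j c <= line k c) ->
  exists f, In f (polys_of D) /\ peval f (pt c (line k c)) = 0 /\
            exists s, peval f (pt c s) <> 0.
Proof.
  intros Henv.
  assert (Hin : NT (pt c (line k c))) by (apply NT_pt; exact Henv).
  apply HD, Exists_exists in Hin. destruct Hin as [C [HC Hholds]].
  destruct (clause_rigid_or_open (pt c) (line k c) C (poly_curve_vertical c) Hholds)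
    as [[p [Hp Hrigid]]|[d [Hd Hnear]]].
  - exists p; split; [|exact Hrigid].
    apply in_flat_map; exists C; split; [exact HC|].
    apply (in_map fst C (p, REq)); exact Hp.
  - exfalso.
    assert (Hbelow : NT (pt c (line k c - d / 2))).
    { apply HD, Exists_exists; exists C; split; [exact HC|].
      apply Hnear; rewrite Rabs_left; lra. }
    apply NT_pt with (k := k) in Hbelow. lra.
Qed.

Lemma line_witness k : exists f, In f (polys_of D) /\
  (forall c, peval f (pt c (line k c)) = 0) /\ exists c s, peval f (pt c s) <> 0.
Proof.
  destruct (pigeonhole_always (polys_of D) (fun f n =>
      peval f (pt (corner k n) (line k (corner k n))) = 0 /\
      exists s, peval f (pt (corner k n) s) <> 0)) as [f [Hf Hinf]].
  { intro n. apply boundary_witness, envelope_attained, theta_bounds. }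
  exists f; split; [exact Hf|]. split.
  - apply (PolyF_zero_along _ (corner k) (peval_poly_curve f _ (poly_curve_line k))
             (corner_decreasing k)).
    intros N. destruct (Hinf N) as [n [Hn [Hzero _]]]. exists n; split; assumption.
  - destruct (Hinf 0%nat) as [n [_ [_ Hnz]]]. exists (corner k n); exact Hnz.
Qed.

End FiniteDescription.

Theorem proposition3 : ~ semialgebraic3 NT.
Proof.
  intros [D HD].
  (* one polynomial vanishes on infinitely many lines L_k *)
  destruct (pigeonhole_always (polys_of D) (fun f k =>
      (forall c, peval f (pt c (line k c)) = 0) /\ exists c s, peval f (pt c s) <> 0))
    as [f [_ Hinf]]; [exact (line_witness D HD)|].
  destruct (Hinf 0%nat) as [k0 [_ [_ [c0 [s0 Hnz]]]]].
  (* hence it vanishes at infinitely many points of the vertical line at c0 *)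
  apply Hnz, (PolyF_zero_along _ (fun k => line k c0)
                (peval_poly_curve f _ (poly_curve_vertical c0)) (line_decreasing c0)).
  intros N. destruct (Hinf N) as [k [Hk [Hline _]]]. exists k; split; [exact Hk | apply Hline].
Qed.
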